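(* Let $r$ be a Hermitian symmetric polynomial in $n$ variables, let $t\mapsto z(t)$ be a holomorphic polynomial mapping $\mathbb{C}\to\mathbb{C}^n$, and let $z^*r$ denote the Hermitian symmetric polynomial in one variable $t\mapsto r(z(t),\overline{z(t)})$. Then: (i) if $r\in\mathcal{Q}(n)$ then $z^*r\in\mathcal{Q}(1)$; (ii) if $r\in\mathcal{Q}'(n)$ then $z^*r\in\mathcal{Q}'(1)$; (iii) for every integer $k\ge1$ and for $k=\infty$, if $r\in\mathcal{P}_k(n)$ then $z^*r\in\mathcal{P}_k(1)$.
   Context: A Hermitian symmetric polynomial in $n$ variables is $r(z,\overline w)=\sum c_{\alpha\beta}z^\alpha\overline w^\beta$ with $c_{\alpha\beta}=\overline{c_{\beta\alpha}}$. For a positive integer $k$, $r\in\mathcal{P}_k(n)$ if for every choice of $k$ points $z_1,\dots,z_k\in\mathbb{C}^n$ the $k\times k$ matrix $(r(z_i,\overline{z_j}))$ is non-negative definite. $r\in\mathcal{P}_\infty(n)$ if $r(z,\overline z)=\|h(z)\|^2$ for some holomorphic polynomial mapping $h$ (with values in some $\mathbb{C}^N$). $\mathcal{Q}(n)$: $r=\|F\|^2/\|G\|^2$ for holomorphic polynomial mappings $F,G$, $G\not\equiv0$. $\mathcal{Q}'(n)$: $r\in\mathcal{P}_1(n)$ and there exist $s\in\mathcal{P}_1(n)$, not identically $0$, and a holomorphic polynomial mapping $F$ with $rs=\|F\|^2$. *)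

From HB Require Import structures.
From mathcomp Require Import all_boot all_order all_algebra.
From mathcomp Require Import reals.
From mathcomp Require Import complex.
From mathcomp Require Import mpoly.

Set Implicit Arguments.
Unset Strict Implicit.
Unset Printing Implicit Defensive.

Import Order.TTheory GRing.Theory Num.Theory.
Local Open Scope ring_scope.

Section HermDefs.
Variable R : realType.
Local Notation C := (R[i]).

(* A polynomial r(z, wbar) = sum c_{ab} z^a wbar^b in n variables is encoded
   as an element of {mpoly C[n + n]}: the first n variables stand for z,
   the last n for wbar. *)

Definition swap_idx (n : nat) (i : 'I_(n + n)) : 'I_(n + n) :=
  match split i with
  | inl j => rshift n j
  | inr j => lshift n j
  end.

Definition swapm (n : nat) (m : 'X_{1..n + n}) : 'X_{1..n + n} :=
  [multinom m (swap_idx i) | i < n + n].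

Definition hsym_poly (n : nat) (r : {mpoly C[n + n]}) : Prop :=
  forall m : 'X_{1..n + n}, r@_m = (r@_(swapm m))^*.

Definition hevalp (n : nat) (r : {mpoly C[n + n]}) (z w : 'I_n -> C) : C :=
  r.@[fun i => match split i with inl j => z j | inr j => (w j)^* end].

Definition hsqnorm (n N : nat) (h : 'I_N -> {mpoly C[n]}) (z : 'I_n -> C) : C :=
  \sum_(j < N) (h j).@[z] * ((h j).@[z])^*.

Definition nonneg_definite (k : nat) (M : 'M[C]_k) : Prop :=
  forall v : 'I_k -> C, 0 <= \sum_(i < k) \sum_(j < k) (v i)^* * M i j * v j.

Definition in_Pk (n k : nat) (r : {mpoly C[n + n]}) : Prop :=
  hsym_poly r /\
  forall pts : 'I_k -> 'I_n -> C,
    nonneg_definite (\matrix_(i < k, j < k) hevalp r (pts i) (pts j)).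

Definition in_Pinf (n : nat) (r : {mpoly C[n + n]}) : Prop :=
  hsym_poly r /\
  exists (N : nat) (h : 'I_N -> {mpoly C[n]}),
    forall z : 'I_n -> C, hevalp r z z = hsqnorm h z.

Definition in_Q (n : nat) (r : {mpoly C[n + n]}) : Prop :=
  hsym_poly r /\
  exists (N M : nat) (F : 'I_N -> {mpoly C[n]}) (G : 'I_M -> {mpoly C[n]}),
    (exists j, G j != 0) /\
    forall z : 'I_n -> C, hsqnorm G z != 0 ->
      hevalp r z z = hsqnorm F z / hsqnorm G z.

Definition in_Q' (n : nat) (r : {mpoly C[n + n]}) : Prop :=
  in_Pk 1 r /\
  exists (s : {mpoly C[n + n]}) (N : nat) (F : 'I_N -> {mpoly C[n]}),
    in_Pk 1 s /\ s != 0 /\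
    forall z : 'I_n -> C, hevalp r z z * hevalp s z z = hsqnorm F z.

(* hpullback z^* r along a holomorphic polynomial map t |-> z(t), C -> C^n:
   substitute z_j(t) for the j-th z-variable and conj(z_j)(sbar) (the
   polynomial with conjugated coefficients, in the variable sbar) for the
   j-th wbar-variable. *)
Definition hpullback (n : nat) (r : {mpoly C[n + n]}) (z : 'I_n -> {poly C})
  : {mpoly C[1 + 1]} :=
  comp_mpoly
    [tuple match split i with
           | inl j => (map_poly (fun c : C => c%:MP) (z j)).['X_(lshift 1 ord0)]
           | inr j => (map_poly (fun c : C => (c^*)%:MP) (z j)).['X_(rshift 1 ord0)]
           end | i < n + n] r.

End HermDefs.

(* Evaluation commutes with the pullback, which settles P_k and P_infinity.  For Q
   and Q' the defining identity r ||G||^2 = ||F||^2 (resp. r s = ||F||^2) can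
   degenerate along z, since G o z (resp. s o z) may vanish identically.  We
   therefore move along the family z(t) + e v, with v chosen so that G (resp. s)
   does not vanish on it, expand in powers of e, and compare lowest coefficients:
   a sum of squared moduli of polynomials in e vanishes to an even order 2m, and
   its coefficient of e^(2m) is the squared norm of the coefficients of e^m.  These
   coefficients are the new holomorphic maps; the new Hermitian factor s' is
   nonnegative on the diagonal as a limit of nonnegative values. *)

From HB Require Import structures.
From mathcomp Require Import all_boot all_order all_algebra all_fingroup.
From mathcomp Require Import reals complex mpoly.
From mathcomp Require Import ring zify.
From Stdlib Require Import Classical.

Set Implicit Arguments.
Unset Strict Implicit.
Unset Printing Implicit Defensive.

Import Order.TTheory GRing.Theory Num.Theory.
Local Open Scope ring_scope.

Lemma split_lshift m k (j : 'I_m) : split (lshift k j) = inl j.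
Proof. exact: (unsplitK (inl _ j)). Qed.

Lemma split_rshift m k (j : 'I_k) : split (rshift m j) = inr j.
Proof. exact: (unsplitK (inr _ j)). Qed.

Definition mext (T : Type) (n : nat) (w : 'I_n -> T) (x : T) (i : 'I_n.+1) : T :=
  if unlift ord_max i is Some j then w j else x.

Lemma mext_lift T n (w : 'I_n -> T) x j : mext w x (lift ord_max j) = w j.
Proof. by rewrite /mext liftK. Qed.

Lemma mext_max T n (w : 'I_n -> T) x : mext w x ord_max = x.
Proof. by rewrite /mext unlift_none. Qed.

Section LowCoefficients.
Variable R : nzRingType.

Lemma poly_lowE m (q : {poly R}) :
  (forall k, (k < m)%N -> q`_k = 0) -> q = drop_poly m q * 'X^m.
Proof.
move=> low; rewrite -{1}(poly_take_drop m q).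
suff -> : take_poly m q = 0 by rewrite add0r.
by apply/polyP => k; rewrite coef_take_poly coef0; case: ifP => // /low.
Qed.

Lemma coefM_low m (p q : {poly R}) : (forall k, (k < m)%N -> q`_k = 0) ->
  (forall k, (k < m)%N -> (p * q)`_k = 0) /\ (p * q)`_m = p`_0 * q`_m.
Proof.
move=> /poly_lowE qE; rewrite [in p * q]qE mulrA; split=> [k km|].
  by rewrite coefMXn km.
by rewrite coefMXn ltnn subnn coef0M coef_drop_poly.
Qed.

Lemma exists_lowest_coef M (g : 'I_M -> {poly R}) j0 : g j0 != 0 ->
  exists m, (forall j k, (k < m)%N -> (g j)`_k = 0) /\ exists j, (g j)`_m != 0.
Proof.
move=> g0; have ex_nz : exists k, [exists j, (g j)`_k != 0].
  by exists (size (g j0)).-1; apply/existsP; exists j0; rewrite -lead_coefE lead_coef_eq0.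
have [m /existsP[j gm] m_min] := ex_minnP ex_nz.
exists m; split; last by exists j.
move=> j' k km; apply/eqP; apply: contraTT km => gk; rewrite -leqNgt m_min //.
by apply/existsP; exists j'.
Qed.

End LowCoefficients.

Section MultivariateEvaluation.
Variable R : comNzRingType.

Lemma rmorph_meval n (S : comNzRingType) (h : {rmorphism R -> S}) (q : {mpoly R[n]}) v :
  h q.@[v] = (map_mpoly h q).@[h \o v].
Proof.
rewrite [in LHS](mpolyE q) [in RHS](mpolyE q).
rewrite (raddf_sum (meval v)) (raddf_sum h) (raddf_sum (map_mpoly h)).
rewrite (raddf_sum (meval (h \o v))); apply: eq_bigr => m _.
rewrite /= (mevalZ v) (mevalX v) rmorphM rmorph_prod /= map_mpolyZ map_mpolyX.
rewrite (mevalZ (h \o v)) (mevalX (h \o v)); congr (_ * _).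
by apply: eq_bigr => i _; rewrite rmorphXn.
Qed.

Lemma meval_msym n (s : 'S_n) (p : {mpoly R[n]}) v :
  (msym s p).@[v] = p.@[fun i => v (s i)].
Proof.
have -> : msym s p = p \mPo [tuple 'X_(s i) | i < n].
  rewrite /msym /comp_mpoly /mmap; apply: eq_bigr => m _; congr (_ * _).
  by apply: eq_bigr => i _; rewrite tnth_mktuple.
by rewrite comp_mpoly_meval; apply: meval_eq => i; rewrite tnth_mktuple mevalXU.
Qed.

End MultivariateEvaluation.

Section PolynomialsOnIntegers.
Variable R : numDomainType.

Lemma eq_poly_natr (p q : {poly R}) :
  (forall k : nat, p.[k%:R] = q.[k%:R]) -> p = q.
Proof.
move=> pq; apply/eqP; rewrite -subr_eq0; apply/eqP.
apply: (@roots_geq_poly_eq0 _ _ [seq k%:R | k <- iota 0 (size (p - q))]).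
- by apply/allP => _ /mapP[k _ ->]; rewrite rootE !hornerE pq subrr.
- by rewrite map_inj_uniq ?iota_uniq // => a b /eqP; rewrite eqr_nat => /eqP.
- by rewrite size_map size_iota.
Qed.

Lemma mulr_poly_natr (a b d : {poly R}) : b != 0 ->
  (forall k : nat, b.[k%:R] != 0 -> a.[k%:R] * b.[k%:R] = d.[k%:R]) -> a * b = d.
Proof.
move=> b0 abd; apply: (mulIf b0); apply: eq_poly_natr => k; rewrite !hornerM.
by have [->|/abd <-] := eqVneq b.[k%:R] 0; rewrite ?mulr0.
Qed.

Lemma meval_muni n (p : {mpoly R[n.+1]}) (v : 'I_n.+1 -> R) :
  p.@[v] = (map_poly (meval (fun i => v (lift ord_max i))) (muni p)).[v ord_max].
Proof.
rewrite muniE mevalE raddf_sum horner_sum; apply: eq_bigr => m _.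
set w := fun i => v (lift ord_max i).
rewrite -!mul_polyC [X in X.[_]]/= (@rmorphM _ _ (map_poly (meval w))) /=.
rewrite map_polyC map_polyXn hornerM hornerXn hornerC.
rewrite /= (mevalZ w) (mevalX w) big_ord_recr /= mulrA; congr (_ * _ * _).
apply: eq_bigr => i _; rewrite mnmE; congr (v _ ^+ m _); apply: val_inj.
by rewrite /= /bump leqNgt ltn_ord.
Qed.

Lemma horner_muni n (p : {mpoly R[n.+1]}) (w : 'I_n -> R) (x : R) :
  (map_poly (meval w) (muni p)).[x] = p.@[mext w x].
Proof.
rewrite meval_muni mext_max; congr (_.[_]); apply: eq_map_poly => q.
by apply: meval_eq => i; rewrite mext_lift.
Qed.

Lemma mcoeff_muni n (p : {mpoly R[n.+1]}) (m : 'X_{1..n.+1}) :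
  ((muni p)`_(m ord_max))@_[multinom m (widen_ord (leqnSn n) i) | i < n] = p@_m.
Proof.
set m' := [multinom m (widen_ord (leqnSn n) i) | i < n].
have eq_m (m2 : 'X_{1..n.+1}) :
    ([multinom m2 (widen_ord (leqnSn n) i) | i < n] == m') && (m ord_max == m2 ord_max)
    = (m2 == m).
  apply/idP/eqP => [/andP[/eqP E1 /eqP E2]|->]; last by rewrite !eqxx.
  apply/mnmP => i; have [j ->|->] := unliftP ord_max i; last by [].
  have -> : lift ord_max j = widen_ord (leqnSn n) j.
    by apply: val_inj; rewrite /= /bump leqNgt ltn_ord.
  by have := congr1 (fun mm : 'X_{1..n} => mm j) E1; rewrite !mnmE.
have and_natr (a b : bool) (x : R) : x * a%:R *+ b = x * (a && b)%:R.
  by case: a; case: b; rewrite ?mulr1 ?mulr0 ?mulr0n ?mulr1n.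
rewrite muniE coef_sum raddf_sum /=.
under eq_bigr => m2 _.
  by rewrite coefZ coefXn mulr_natr mcoeffMn mcoeffZ mcoeffX and_natr eq_m; over.
have [pm|pm] := boolP (m \in msupp p).
  rewrite (bigD1_seq m) //= ?msupp_uniq // eqxx mulr1 big1_seq ?addr0 //.
  by move=> m2 /andP[/negbTE -> _]; rewrite mulr0.
rewrite big1_seq; first by apply/esym/eqP; rewrite mcoeff_eq0.
by move=> m2 /andP[_ pm2]; case: eqP pm2 pm => [->->|]; rewrite ?mulr0.
Qed.

Lemma mpoly_natr_eq0 n (p : {mpoly R[n]}) :
  (forall v : 'I_n -> nat, p.@[fun i => (v i)%:R] = 0) -> p = 0.
Proof.
elim: n p => [|n IHn] p p0.
  by have := p0 (fun=> 0%N); rewrite (nvar0_mpolyC p) mevalC => ->.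
apply/mpolyP => m; rewrite mcoeff0 -mcoeff_muni.
suff -> : (muni p)`_(m ord_max) = 0 by rewrite mcoeff0.
apply: IHn => v; rewrite -coef_map.
suff -> : map_poly (meval (fun i => (v i)%:R)) (muni p) = 0 by rewrite coef0.
apply: eq_poly_natr => k; rewrite horner0 horner_muni -[RHS](p0 (mext v k)).
by apply: meval_eq => i; rewrite /mext; case: unlift.
Qed.

Lemma mpoly_neq0_eval n (p : {mpoly R[n]}) : p != 0 -> exists v, p.@[v] != 0.
Proof.
move=> p0; apply: NNPP => eval0; move/eqP: p0; apply.
apply: mpoly_natr_eq0 => v; apply: NNPP => pv0; apply: eval0.
by exists (fun i => (v i)%:R); apply/eqP.
Qed.

End PolynomialsOnIntegers.

Section SquaredNorms.
Variable C : numClosedFieldType.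

Definition conjp (q : {poly C}) : {poly C} := map_poly Num.conj q.

Definition sqnorm N (c : 'I_N -> C) : C := \sum_(j < N) c j * (c j)^*.

Definition sqnormp N (g : 'I_N -> {poly C}) : {poly C} :=
  \sum_(j < N) g j * conjp (g j).

Lemma sqnorm_eq0 N (c : 'I_N -> C) : sqnorm c = 0 -> forall j, c j = 0.
Proof.
move=> c0 j; have /(_ j isT) := psumr_eq0P (fun i _ => mul_conjC_ge0 (c i)) c0.
by move/eqP; rewrite mul_conjC_eq0 => /eqP.
Qed.

Lemma horner_conjp_natr q (k : nat) : (conjp q).[k%:R] = (q.[k%:R])^*.
Proof. by rewrite -horner_map /= conjC_nat. Qed.

Lemma horner_sqnormp_natr N (g : 'I_N -> {poly C}) (k : nat) :
  (sqnormp g).[k%:R] = sqnorm (fun j => (g j).[k%:R]).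
Proof.
rewrite horner_sum; apply: eq_bigr => j _.
by rewrite hornerM horner_conjp_natr.
Qed.

Lemma sqnormp_low N m (g : 'I_N -> {poly C}) :
  (forall j k, (k < m)%N -> (g j)`_k = 0) ->
  sqnormp g = sqnormp (fun j => drop_poly m (g j)) * 'X^(m + m).
Proof.
move=> low; rewrite /sqnormp mulr_suml; apply: eq_bigr => j _.
rewrite {1 2}(poly_lowE (low j)) /conjp rmorphM /= map_polyXn exprD.
by rewrite mulrACA.
Qed.

Lemma coef_sqnormp_double N m (g : 'I_N -> {poly C}) :
  (forall j k, (k < m)%N -> (g j)`_k = 0) ->
  (forall k, (k < m + m)%N -> (sqnormp g)`_k = 0) /\
  (sqnormp g)`_(m + m) = sqnorm (fun j => (g j)`_m).
Proof.
move=> /sqnormp_low ->; split=> [k km|]; first by rewrite coefMXn km.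
rewrite coefMXn ltnn subnn coef_sum; apply: eq_bigr => j _.
by rewrite coef0M coef_map /= coef_drop_poly.
Qed.

Lemma coef_sqnormp_lowest N m (f : 'I_N -> {poly C}) :
  (forall k, (k < m)%N -> (sqnormp f)`_k = 0) ->
  (sqnormp f)`_m = if odd m then 0 else sqnorm (fun j => (f j)`_(m./2)).
Proof.
move=> low; have mE := odd_double_half m.
have flow k : (k <= uphalf m)%N -> forall j i, (i < k)%N -> (f j)`_i = 0.
  elim: k => [//|k IHk] km j i; rewrite ltnS leq_eqVlt => /orP[/eqP->|]; last first.
    exact: IHk (ltnW km) j i.
  have [_ top] := coef_sqnormp_double (IHk (ltnW km)).
  apply: (@sqnorm_eq0 _ (fun j => (f j)`_k)); rewrite -top low //.
  by move: km; rewrite uphalf_half; case: (odd m) mE => /=; lia.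
have [_ top] := coef_sqnormp_double (flow _ (leqnn _)).
rewrite uphalf_half in top; have [om|em] := boolP (odd m).
  rewrite (sqnormp_low (flow _ (leqnn _))) coefMXn ifT //.
  by move: mE; rewrite uphalf_half om; lia.
have m2 : (m./2 + m./2)%N = m by rewrite addnn -[RHS]odd_double_half (negbTE em).
by rewrite (negbTE em) add0n m2 in top.
Qed.

Lemma coef_sqnormp_ratio N M m (p : {poly C}) (g : 'I_M -> {poly C})
    (f : 'I_N -> {poly C}) :
  (forall j k, (k < m)%N -> (g j)`_k = 0) -> p * sqnormp g = sqnormp f ->
  p`_0 * sqnorm (fun j => (g j)`_m) = sqnorm (fun j => (f j)`_m).
Proof.
move=> /coef_sqnormp_double[glow gtop] pgf.
have [flow ftop] := coefM_low p glow; rewrite pgf in flow ftop.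
by rewrite -gtop -ftop coef_sqnormp_lowest // addnn odd_double doubleK.
Qed.

Lemma sqnorm_ratio_lowest N M m (p : {poly C}) (g : 'I_M -> {poly C})
    (f : 'I_N -> {poly C}) :
  (forall j k, (k < m)%N -> (g j)`_k = 0) ->
  sqnorm (fun j => (g j)`_m) != 0 ->
  (forall k : nat, sqnorm (fun j => (g j).[k%:R]) != 0 ->
     p.[k%:R] * sqnorm (fun j => (g j).[k%:R]) = sqnorm (fun j => (f j).[k%:R])) ->
  p`_0 * sqnorm (fun j => (g j)`_m) = sqnorm (fun j => (f j)`_m).
Proof.
move=> g_low gm0 pgf; apply: (coef_sqnormp_ratio g_low).
apply: mulr_poly_natr => [|k]; last by rewrite !horner_sqnormp_natr; exact: pgf.
have [_ g_top] := coef_sqnormp_double g_low.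
by apply: contra_neq gm0 => g0; rewrite -g_top g0 coef0.
Qed.

End SquaredNorms.

Section PositivityNearZero.
Variable F : numFieldType.

Lemma small_ge0_eq0 (x K : F) : 0 <= x -> 0 <= K ->
  (forall e, 0 < e -> e <= 1 -> x <= e * K) -> x = 0.
Proof.
move=> x0 K0 small; apply/eqP; apply: contraT => nx0.
have xgt0 : 0 < x by rewrite lt_def nx0 x0.
have sgt0 : 0 < x + K + 1 by apply: ltr_wpDl; rewrite ?addr_ge0.
have e1 : x / (x + K + 1) <= 1 by rewrite ler_pdivrMr // mul1r -addrA lerDl addr_ge0.
have := small _ (divr_gt0 xgt0 sgt0) e1.
rewrite mulrAC ler_pdivlMr // (_ : x * _ = x * K + x * (x + 1)); last by ring.
by rewrite gerDl lt_geF // mulr_gt0 // ltr_wpDl.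
Qed.

Lemma coef0_ge0_near0 (q : {poly F}) :
  (forall e, 0 < e -> e <= 1 -> 0 <= q.[e]) -> 0 <= q`_0.
Proof.
move=> q_ge0; set D := drop_poly 1 q; set c := q`_0.
have qE e : q.[e] = c + e * D.[e].
  rewrite -{1}(poly_take_drop 1 q) hornerD hornerM hornerX mulrC.
  suff -> : take_poly 1 q = c%:P by rewrite hornerC.
  by apply/polyP => i; rewrite coef_take_poly coefC; case: i.
set B := \sum_(i < size D) `|D`_i|.
have B0 : 0 <= B by apply: sumr_ge0.
have DB e : 0 <= e -> e <= 1 -> `|D.[e]| <= B.
  move=> e0 e1; rewrite horner_coef; apply: le_trans (ler_norm_sum _ _ _) _.
  apply: ler_sum => i _; rewrite normrM normrX (ger0_norm e0).
  by rewrite ler_piMr ?normr_ge0 // exprn_ile1.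
(* [|c| - c] is small since [q.[e]] is close to [c] and equal to its modulus. *)
suff : `|c| - c = 0 by move/eqP; rewrite subr_eq0 => /eqP <-.
apply/normr0_eq0/(small_ge0_eq0 (normr_ge0 _) (addr_ge0 B0 B0)) => e e0 e1.
have qc : `|q.[e] - c| <= e * B.
  rewrite qE addrAC subrr add0r normrM (gtr0_norm e0).
  by rewrite ler_pM2l //; exact: DB (ltW e0) e1.
have -> : `|c| - c = (`|c| - `|q.[e]|) + (q.[e] - c).
  by rewrite (ger0_norm (q_ge0 e e0 e1)) addrA subrK.
rewrite mulrDr; apply: le_trans (ler_normD _ _) (lerD _ qc).
by apply: le_trans (ler_dist_dist _ _) _; rewrite distrC.
Qed.

Lemma coef_lowest_ge0 m (q : {poly F}) : (forall k, (k < m)%N -> q`_k = 0) ->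
  (forall e, 0 < e -> e <= 1 -> 0 <= q.[e]) -> 0 <= q`_m.
Proof.
move=> /poly_lowE qE q_ge0; rewrite -[m]add0n -coef_drop_poly.
apply: coef0_ge0_near0 => e e0 e1.
by have := q_ge0 e e0 e1; rewrite {1}qE hornerM hornerXn pmulr_lge0 // exprn_gt0.
Qed.

End PositivityNearZero.

Section HermitianPolynomials.
Variable R : realType.
Local Notation C := R[i].

Definition hpoint n (x y : 'I_n -> C) (i : 'I_(n + n)) : C :=
  match split i with inl j => x j | inr j => (y j)^* end.

Lemma hevalpE n (p : {mpoly C[n + n]}) x y : hevalp p x y = p.@[hpoint x y].
Proof. by []. Qed.

Lemma swap_idxK n : involutive (@swap_idx n).
Proof.
move=> i; rewrite /swap_idx.
by case: (split_ordP i) => j ->; rewrite ?split_lshift ?split_rshift.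
Qed.

Definition swap_perm n : 'S_(n + n) := perm (inv_inj (@swap_idxK n)).

Definition hconj n (p : {mpoly C[n + n]}) : {mpoly C[n + n]} :=
  map_mpoly Num.conj (msym (swap_perm n) p).

Lemma hsym_hconj n (p : {mpoly C[n + n]}) : hsym_poly p <-> hconj p = p.
Proof.
have coefE m : (hconj p)@_m = (p@_(swapm m))^*.
  rewrite mcoeff_map_mpoly mcoeff_sym; congr (p@__)^*.
  by apply/mnmP => i; rewrite !mnmE permE.
split=> [p_sym|pE m]; first by apply/mpolyP => m; rewrite coefE -p_sym.
by rewrite -{1}pE coefE.
Qed.

Lemma meval_map_conj k (q : {mpoly C[k]}) w :
  (map_mpoly Num.conj q).@[w] = (q.@[fun i => (w i)^*])^*.
Proof. by rewrite rmorph_meval; apply: meval_eq => i /=; rewrite conjCK. Qed.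

Lemma hevalp_hconj n (p : {mpoly C[n + n]}) x y :
  hevalp (hconj p) x y = (hevalp p y x)^*.
Proof.
rewrite !hevalpE meval_map_conj meval_msym; congr _^*; apply: meval_eq => i.
rewrite permE /hpoint /swap_idx.
by case: (split_ordP i) => j ij; subst i; rewrite ?split_lshift ?split_rshift ?conjCK.
Qed.

(* Polarization: after the substitution z = s + i t, conj w = s - i t, the
   diagonal values of p become the values of p \mPo T at arbitrary real (s, t),
   and the substitution is invertible. *)
Lemma hpoly_eq0_diag n (p : {mpoly C[n + n]}) :
  (forall x, hevalp p x x = 0) -> p = 0.
Proof.
move=> p0.
pose T := [tuple match split i with
    | inl j => 'X_(lshift n j) + 'i *: 'X_(rshift n j)
    | inr j => 'X_(lshift n j) - 'i *: 'X_(rshift n j) end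
    : {mpoly C[n + n]} | i < n + n].
have evT u i : (tnth T i).@[u] = match split i with
    | inl j => u (lshift n j) + 'i * u (rshift n j)
    | inr j => u (lshift n j) - 'i * u (rshift n j) end.
  rewrite tnth_mktuple; case: (split i) => j.
    by rewrite (mevalD u) (mevalZ u) !(mevalXU u).
  by rewrite (mevalB u) (mevalZ u) !(mevalXU u).
have pT0 : p \mPo T = 0.
  apply: mpoly_natr_eq0 => a; rewrite comp_mpoly_meval.
  pose x j := (a (lshift n j))%:R + 'i * (a (rshift n j))%:R : C.
  rewrite -(p0 x) hevalpE; apply: meval_eq => i; rewrite evT /hpoint.
  case: (split i) => j //.
  by rewrite /x rmorphD rmorphM /= conjCi !conjC_nat mulNr.
have i0 : ('i : C) != 0 by rewrite -normr_eq0 normCi oner_eq0.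
have two0 : (2 : C) != 0 by rewrite pnatr_eq0.
apply: mpoly_natr_eq0 => a; set u := fun i => _.
pose w i := match split i with
    | inl j => (u (lshift n j) + u (rshift n j)) / 2
    | inr j => (u (lshift n j) - u (rshift n j)) / (2 * 'i) end : C.
rewrite -(meval0 w) -pT0 comp_mpoly_meval; apply: meval_eq => i; rewrite evT.
case: (split_ordP i) => j ij; subst i; rewrite /w !split_lshift !split_rshift.
  by field.
by field.
Qed.

Lemma hpoly_neq0_diag n (p : {mpoly C[n + n]}) :
  p != 0 -> exists x, hevalp p x x != 0.
Proof.
move=> p0; apply: NNPP => diag0; move/eqP: p0; apply; apply: hpoly_eq0_diag => x.
by apply: NNPP => px; apply: diag0; exists x; apply/eqP.
Qed.

Lemma hsym_polyP n (p : {mpoly C[n + n]}) :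
  hsym_poly p <-> forall x, (hevalp p x x)^* = hevalp p x x.
Proof.
split=> [/hsym_hconj pE x | p_real]; first by rewrite -hevalp_hconj pE.
apply/hsym_hconj/eqP; rewrite -subr_eq0; apply/eqP/hpoly_eq0_diag => x.
by rewrite hevalpE mevalB -!hevalpE hevalp_hconj p_real subrr.
Qed.

Lemma in_P1P n (p : {mpoly C[n + n]}) :
  in_Pk 1 p <-> forall x, 0 <= hevalp p x x.
Proof.
split=> [[_ p_ge0] x | p_ge0].
  have := p_ge0 (fun=> x) (fun=> 1).
  by rewrite !big_ord1 !mxE conjC1 mul1r mulr1.
split=> [|pts c]; first by apply/hsym_polyP => x; rewrite geC0_conj.
rewrite !big_ord1 !mxE mulrC mulrA.
by apply: mulr_ge0 => //; apply: mul_conjC_ge0.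
Qed.

End HermitianPolynomials.

Section Pullback.
Variable R : realType.
Local Notation C := R[i].
Local Notation polyMP p := (map_poly (fun c : C => c%:MP) p).
Local Notation conjpolyMP p := (map_poly (fun c : C => (c^*)%:MP) p).

Lemma meval_horner_polyMP k (p : {poly C}) (i : 'I_k) u :
  ((polyMP p).['X_i]).@[u] = p.[u i].
Proof.
rewrite -(horner_map (meval u)) /= (mevalXU u) -map_poly_comp.
by rewrite (@eq_map_poly _ _ _ idfun) ?map_poly_id // => c; rewrite /= mevalC.
Qed.

Lemma meval_horner_conjpolyMP k (p : {poly C}) (i : 'I_k) u :
  ((conjpolyMP p).['X_i]).@[u] = (p.[(u i)^*])^*.
Proof.
rewrite -(horner_map (meval u)) /= (mevalXU u) -map_poly_comp.
rewrite (@eq_map_poly _ _ _ Num.conj) => [|c]; last by rewrite /= mevalC.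
by rewrite -{1}(conjCK (u i)) horner_map.
Qed.

Lemma hevalp_pullback n (r : {mpoly C[n + n]}) (z : 'I_n -> {poly C}) x y :
  hevalp (hpullback r z) x y =
  hevalp r (fun j => (z j).[x ord0]) (fun j => (z j).[y ord0]).
Proof.
rewrite /hpullback hevalpE comp_mpoly_meval hevalpE; apply: meval_eq => i.
rewrite tnth_mktuple /hpoint; case: (split i) => j.
  by rewrite meval_horner_polyMP split_lshift.
by rewrite meval_horner_conjpolyMP split_rshift conjCK.
Qed.

Lemma hsym_pullback n (r : {mpoly C[n + n]}) (z : 'I_n -> {poly C}) :
  hsym_poly r -> hsym_poly (hpullback r z).
Proof.
by move=> /hsym_polyP r_real; apply/hsym_polyP => x; rewrite hevalp_pullback.
Qed.

Definition mpullback n (h : {mpoly C[n]}) (z : 'I_n -> {poly C}) : {mpoly C[1]} :=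
  h \mPo [tuple (polyMP (z i)).['X_ord0] | i < n].

Lemma meval_mpullback n (h : {mpoly C[n]}) z t :
  (mpullback h z).@[t] = h.@[fun j => (z j).[t ord0]].
Proof.
rewrite comp_mpoly_meval; apply: meval_eq => i.
by rewrite tnth_mktuple meval_horner_polyMP.
Qed.

Lemma in_Pk_pullback n k (r : {mpoly C[n + n]}) (z : 'I_n -> {poly C}) :
  in_Pk k r -> in_Pk k (hpullback r z).
Proof.
case=> r_sym r_pos; split; first exact: hsym_pullback.
move=> pts; have := r_pos (fun i j => (z j).[pts i ord0]).
by congr nonneg_definite; apply/matrixP => i j; rewrite !mxE hevalp_pullback.
Qed.

Lemma in_Pinf_pullback n (r : {mpoly C[n + n]}) (z : 'I_n -> {poly C}) :
  in_Pinf r -> in_Pinf (hpullback r z).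
Proof.
case=> r_sym [N [h rh]]; split; first exact: hsym_pullback.
exists N, (fun j => mpullback (h j) z) => t; rewrite hevalp_pullback rh.
by apply: eq_bigr => j _; rewrite meval_mpullback.
Qed.

(* h(z(t) + e v) in the variables (t, e); e comes last, so [muni] expands in e. *)
Definition mpullback_shift n (h : {mpoly C[n]}) (z : 'I_n -> {poly C})
    (v : 'I_n -> C) : {mpoly C[2]} :=
  h \mPo [tuple (polyMP (z i)).['X_(lift ord_max ord0)] + 'X_ord_max * (v i)%:MP
         | i < n].

(* s(z(a) + e v, conj (z(b) + e v)) in the variables (a, conj b, e). *)
Definition hpullback_shift n (s : {mpoly C[n + n]}) (z : 'I_n -> {poly C})
    (v : 'I_n -> C) : {mpoly C[3]} :=
  s \mPo [tuple match split i with
          | inl j => (polyMP (z j)).['X_(lift ord_max (lshift 1 ord0))]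
                     + 'X_ord_max * (v j)%:MP
          | inr j => (conjpolyMP (z j)).['X_(lift ord_max (rshift 1 ord0))]
                     + 'X_ord_max * ((v j)^*)%:MP
          end | i < n + n].

Lemma horner_mpullback_shift n (h : {mpoly C[n]}) z v (t : 'I_1 -> C) e :
  (map_poly (meval t) (muni (mpullback_shift h z v))).[e] =
  h.@[fun i => (z i).[t ord0] + e * v i].
Proof.
rewrite horner_muni comp_mpoly_meval; apply: meval_eq => i.
set u := mext t e.
rewrite tnth_mktuple (mevalD u) (mevalM u) (mevalXU u) (mevalC u).
by rewrite meval_horner_polyMP /u mext_lift mext_max.
Qed.

Lemma horner_hpullback_shift n (s : {mpoly C[n + n]}) z v (a b : 'I_1 -> C) e :
  (map_poly (meval (hpoint a b)) (muni (hpullback_shift s z v))).[e] =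
  hevalp s (fun i => (z i).[a ord0] + e * v i)
           (fun i => (z i).[b ord0] + e^* * v i).
Proof.
rewrite horner_muni comp_mpoly_meval hevalpE; apply: meval_eq => i.
set u := mext _ e.
rewrite tnth_mktuple /hpoint; case: (split i) => j.
  rewrite (mevalD u) (mevalM u) (mevalXU u) (mevalC u) meval_horner_polyMP.
  by rewrite /u mext_lift mext_max /hpoint split_lshift.
rewrite (mevalD u) (mevalM u) (mevalXU u) (mevalC u) meval_horner_conjpolyMP.
rewrite /u mext_lift mext_max /hpoint split_rshift.
by rewrite conjCK rmorphD rmorphM /= conjCK.
Qed.

Lemma coef0_hpullback_shift n (s : {mpoly C[n + n]}) z v (a b : 'I_1 -> C) :
  (map_poly (meval (hpoint a b)) (muni (hpullback_shift s z v)))`_0 =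
  hevalp (hpullback s z) a b.
Proof.
rewrite -horner_coef0 horner_hpullback_shift hevalp_pullback conjC0.
rewrite !hevalpE; apply: meval_eq => i.
by rewrite /hpoint; case: (split i) => j; rewrite mul0r addr0.
Qed.

(* [v] is chosen so that the shifted line [z(t) + e v] passes through a point
   where [h] does not vanish (at t = 0, e = 1). *)
Lemma muni_mpullback_shift_neq0 n (h : {mpoly C[n]}) z p :
  h.@[p] != 0 -> muni (mpullback_shift h z (fun i => p i - (z i).[0])) != 0.
Proof.
move=> hp; apply/eqP => h0; move/eqP: hp; apply.
have := horner_mpullback_shift h z (fun i => p i - (z i).[0]) (fun=> 0) 1.
rewrite h0 map_poly0 horner0 => ->; apply: meval_eq => i.
by rewrite mul1r addrC subrK.
Qed.

Lemma muni_hpullback_shift_neq0 n (s : {mpoly C[n + n]}) z p :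
  hevalp s p p != 0 -> muni (hpullback_shift s z (fun i => p i - (z i).[0])) != 0.
Proof.
move=> sp; apply/eqP => s0; move/eqP: sp; apply.
have := horner_hpullback_shift s z (fun i => p i - (z i).[0]) (fun=> 0) (fun=> 0) 1.
rewrite s0 map_poly0 horner0 conjC1 => ->; rewrite !hevalpE; apply: meval_eq => i.
by rewrite /hpoint; case: (split i) => j; rewrite mul1r addrC subrK.
Qed.

Lemma hpullback_ratio_lowest n N M (r : {mpoly C[n + n]}) (F : 'I_N -> {mpoly C[n]})
    (G : 'I_M -> {mpoly C[n]}) z v m t :
  (forall x, hsqnorm G x != 0 -> hevalp r x x = hsqnorm F x / hsqnorm G x) ->
  (forall j k, (k < m)%N -> (muni (mpullback_shift (G j) z v))`_k = 0) ->
  hsqnorm (fun j => (muni (mpullback_shift (G j) z v))`_m) t != 0 ->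
  hevalp (hpullback r z) t t =
  hsqnorm (fun j => (muni (mpullback_shift (F j) z v))`_m) t /
  hsqnorm (fun j => (muni (mpullback_shift (G j) z v))`_m) t.
Proof.
move=> rFG G_low Gt.
pose f j := map_poly (meval t) (muni (mpullback_shift (F j) z v)).
pose g j := map_poly (meval t) (muni (mpullback_shift (G j) z v)).
pose P := map_poly (meval (hpoint t t)) (muni (hpullback_shift r z v)).
pose w (e : C) i := (z i).[t ord0] + e * v i.
have g_low j k : (k < m)%N -> (g j)`_k = 0.
  by move=> km; rewrite /g coef_map G_low // raddf0.
have fg_m : hsqnorm (fun j => (muni (mpullback_shift (F j) z v))`_m) t
              = sqnorm (fun j => (f j)`_m) /\
            hsqnorm (fun j => (muni (mpullback_shift (G j) z v))`_m) t
              = sqnorm (fun j => (g j)`_m).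
  by split; apply: eq_bigr => j _; rewrite /f /g !coef_map.
have Pk (k : nat) : P.[k%:R] = hevalp r (w k%:R) (w k%:R).
  by rewrite horner_hpullback_shift conjC_nat.
have fk (k : nat) : sqnorm (fun j => (f j).[k%:R]) = hsqnorm F (w k%:R).
  by apply: eq_bigr => j _; rewrite !horner_mpullback_shift.
have gk (k : nat) : sqnorm (fun j => (g j).[k%:R]) = hsqnorm G (w k%:R).
  by apply: eq_bigr => j _; rewrite !horner_mpullback_shift.
have P0 : P`_0 = hevalp (hpullback r z) t t by exact: coef0_hpullback_shift.
(* Otherwise [rewrite] tries to unify these polynomials by computing them. *)
clearbody f g P.
have gm0 : sqnorm (fun j => (g j)`_m) != 0 by rewrite -fg_m.2.
have key := sqnorm_ratio_lowest g_low gm0 (p := P) (f := f).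
rewrite fg_m.1 fg_m.2 -key => [|k]; first by rewrite -P0 mulfK.
by rewrite Pk fk gk => Gk; rewrite rFG // divfK.
Qed.

Lemma in_Q_pullback n (r : {mpoly C[n + n]}) (z : 'I_n -> {poly C}) :
  in_Q r -> in_Q (hpullback r z).
Proof.
move=> [r_sym [N [M [F [G [[j0 Gj0] rFG]]]]]]; split; first exact: hsym_pullback.
have [p Gp] := mpoly_neq0_eval Gj0.
pose v i := p i - (z i).[0].
pose uG j := muni (mpullback_shift (G j) z v).
have uG0 : uG j0 != 0 by exact: muni_mpullback_shift_neq0.
have [m [uG_low [j1 uG_m]]] := exists_lowest_coef uG0.
exists N, M, (fun j => (muni (mpullback_shift (F j) z v))`_m), (fun j => (uG j)`_m).
by split; [exists j1 | move=> t; apply: hpullback_ratio_lowest].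
Qed.

Lemma hpullback_product_lowest n N (r s : {mpoly C[n + n]}) (F : 'I_N -> {mpoly C[n]})
    z v m t :
  (forall x, hevalp r x x * hevalp s x x = hsqnorm F x) ->
  (forall k, (k < m)%N -> (muni (hpullback_shift s z v))`_k = 0) ->
  hevalp (hpullback r z) t t *
    hevalp ((muni (hpullback_shift s z v))`_m : {mpoly C[1 + 1]}) t t =
  if odd m then 0 else hsqnorm (fun j => (muni (mpullback_shift (F j) z v))`_(m./2)) t.
Proof.
move=> rsF s_low.
pose S := map_poly (meval (hpoint t t)) (muni (hpullback_shift s z v)).
pose P := map_poly (meval (hpoint t t)) (muni (hpullback_shift r z v)).
pose f j := map_poly (meval t) (muni (mpullback_shift (F j) z v)).
pose w (e : C) i := (z i).[t ord0] + e * v i.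
have S_low k : (k < m)%N -> S`_k = 0 by move=> km; rewrite /S coef_map s_low // raddf0.
have Sm : S`_m = hevalp ((muni (hpullback_shift s z v))`_m : {mpoly C[1 + 1]}) t t.
  by rewrite /S coef_map.
have P0 : P`_0 = hevalp (hpullback r z) t t by exact: coef0_hpullback_shift.
have fm : sqnorm (fun j => (f j)`_(m./2)) =
          hsqnorm (fun j => (muni (mpullback_shift (F j) z v))`_(m./2)) t.
  by apply: eq_bigr => j _; rewrite /f coef_map.
have Pk (k : nat) : P.[k%:R] = hevalp r (w k%:R) (w k%:R).
  by rewrite horner_hpullback_shift conjC_nat.
have Sk (k : nat) : S.[k%:R] = hevalp s (w k%:R) (w k%:R).
  by rewrite horner_hpullback_shift conjC_nat.
have fk (k : nat) : sqnorm (fun j => (f j).[k%:R]) = hsqnorm F (w k%:R).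
  by apply: eq_bigr => j _; rewrite !horner_mpullback_shift.
clearbody P S f.
have PSf : P * S = sqnormp f.
  by apply: eq_poly_natr => k; rewrite hornerM horner_sqnormp_natr Pk Sk rsF fk.
have [PS_low PSm] := coefM_low P S_low; rewrite PSf in PS_low PSm.
by rewrite -P0 -Sm -PSm coef_sqnormp_lowest // fm.
Qed.

Lemma in_P1_lowest n (s : {mpoly C[n + n]}) z v m :
  in_Pk 1 s -> (forall k, (k < m)%N -> (muni (hpullback_shift s z v))`_k = 0) ->
  in_Pk 1 ((muni (hpullback_shift s z v))`_m : {mpoly C[1 + 1]}).
Proof.
move=> /in_P1P s_ge0 s_low; apply/in_P1P => t.
pose S := map_poly (meval (hpoint t t)) (muni (hpullback_shift s z v)).
have <- : S`_m = hevalp ((muni (hpullback_shift s z v))`_m : {mpoly C[1 + 1]}) t t.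
  by rewrite /S coef_map.
apply: coef_lowest_ge0 => [k km|e e0 _]; first by rewrite /S coef_map s_low // raddf0.
by rewrite horner_hpullback_shift geC0_conj; [exact: s_ge0 | exact: ltW].
Qed.

Lemma in_Q'_pullback n (r : {mpoly C[n + n]}) (z : 'I_n -> {poly C}) :
  in_Q' r -> in_Q' (hpullback r z).
Proof.
move=> [r_P1 [s [N [F [s_P1 [s0 rsF]]]]]]; split; first exact: in_Pk_pullback.
have [->|rz0] := eqVneq (hpullback r z) 0.
  exists 1, 0%N, (fun=> 0); split; [|split].
  - by apply/in_P1P => x; rewrite hevalpE meval1 ler01.
  - exact: oner_neq0.
  - by move=> t; rewrite hevalpE meval0 mul0r /hsqnorm big_ord0.
have [p sp] := hpoly_neq0_diag s0.
pose v i := p i - (z i).[0].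
pose us := muni (hpullback_shift s z v).
have us0 : us != 0 by exact: muni_hpullback_shift_neq0.
have [m [us_low [_ us_m]]] := @exists_lowest_coef _ 1 (fun=> us) ord0 us0.
have rs_m t := hpullback_product_lowest t rsF (us_low ord0).
have m_even : ~~ odd m.
  apply/negP => m_odd; have : hpullback r z * (us`_m : {mpoly C[1 + 1]}) = 0.
    by apply: hpoly_eq0_diag => t; rewrite hevalpE mevalM -!hevalpE rs_m m_odd.
  by move/eqP; rewrite mulf_eq0 (negbTE rz0) (negbTE us_m).
exists us`_m, N, (fun j => (muni (mpullback_shift (F j) z v))`_(m./2)).
split; [exact: in_P1_lowest (us_low ord0) | split=> // t].
by rewrite rs_m (negbTE m_even).
Qed.

End Pullback.

Theorem lemma2p1 (R : realType) (n : nat) (r : {mpoly R[i][n + n]})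
    (z : 'I_n -> {poly R[i]}) :
  hsym_poly r ->
  (in_Q r -> in_Q (hpullback r z)) /\
  (in_Q' r -> in_Q' (hpullback r z)) /\
  (forall k : nat, (0 < k)%N -> in_Pk k r -> in_Pk k (hpullback r z)) /\
  (in_Pinf r -> in_Pinf (hpullback r z)).
Proof.
(* Hermitian symmetry is already part of each class. *)
move=> _; split; first exact: in_Q_pullback.
split; first exact: in_Q'_pullback.
split; first by move=> k _; exact: in_Pk_pullback.
exact: in_Pinf_pullback.
Qed.
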